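(* For every integer $t$, there exists a connected non-bipartite graph whose adjacency matrix has exactly four distinct eigenvalues and which has at least $t$ distinct valencies.
   Context: Graphs are finite, simple and undirected; eigenvalues of a graph are those of its adjacency matrix; valencies are vertex degrees. *)

From mathcomp Require Import all_boot all_order all_algebra.
From mathcomp Require Import algC.
Set Implicit Arguments. Unset Strict Implicit. Unset Printing Implicit Defensive.
Import GRing.Theory Num.Theory.
Local Open Scope ring_scope.

Definition simple_graph (n : nat) (e : rel 'I_n) : Prop :=
  symmetric e /\ irreflexive e.

(* Adjacency matrix, with entries in algC (algebraic complex numbers, an
   algebraically closed field of characteristic 0 containing all the
   (real) eigenvalues). *)
Definition adjmx (n : nat) (e : rel 'I_n) : 'M[algC]_n :=
  \matrix_(i, j) (e i j)%:R.

Definition connected_graph (n : nat) (e : rel 'I_n) : Prop :=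
  (0 < n)%N /\ forall x y : 'I_n, connect e x y.

Definition bipartite (n : nat) (e : rel 'I_n) : Prop :=
  exists c : 'I_n -> bool, forall x y, e x y -> c x != c y.

Definition valency (n : nat) (e : rel 'I_n) (x : 'I_n) : nat :=
  #|[set y | e x y]|.

Definition num_valencies (n : nat) (e : rel 'I_n) : nat :=
  size (undup [seq valency e x | x : 'I_n]).

Definition num_distinct_eigenvalues (n : nat) (e : rel 'I_n) (k : nat) : Prop :=
  exists s : seq algC, [/\ uniq s, size s = k &
    forall a : algC, eigenvalue (adjmx e) a <-> a \in s].

From mathcomp Require Import all_boot all_order all_algebra.
From mathcomp Require Import algC ring zify.
Set Implicit Arguments. Unset Strict Implicit. Unset Printing Implicit Defensive.
Import Order.TTheory GRing.Theory Num.Theory.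
Local Open Scope ring_scope.

(* Add to the complete graph on m points one vertex per block of an incidence
   structure in which any two points lie on lam common blocks and every point
   on lam^2 blocks, each block adjacent to its points.  For the incidence
   matrix N we get N^T N = (lam^2 - lam) I + lam J, so eliminating the block
   coordinates of an eigenvector for a <> 0 leaves
     (a + lam) * s = (a + lam) * (a - lam + 1) * x_p,
   s being the sum of the point coordinates x_p: either a is a root -lam or
   lam - 1 of b (b + 1) = lam^2 - lam, or x is constant and a = m + lam - 1.
   With 0 (two blocks with the same points) these are the four eigenvalues.
   Taking every set of points as a block, a block on i points has valency i,
   and three points form a triangle. *)

Lemma triangle_not_bipartite n (e : rel 'I_n) x y z :
  e x y -> e y z -> e x z -> ~ bipartite e.
Proof.
move=> exy eyz exz [c c_proper].
move: (c_proper _ _ exy) (c_proper _ _ eyz) (c_proper _ _ exz).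
by case: (c x); case: (c y); case: (c z).
Qed.

Section OrdRel.

Variables (T : finType) (r : rel T).

Definition ord_rel : rel 'I_#|T| := fun i j => r (enum_val i) (enum_val j).

Lemma ord_relE x y : ord_rel (enum_rank x) (enum_rank y) = r x y.
Proof. by rewrite /ord_rel !enum_rankK. Qed.

Lemma ord_rel_simple : symmetric r -> irreflexive r -> simple_graph ord_rel.
Proof.
by move=> r_sym r_irr; split=> [i j | i]; rewrite /ord_rel; [apply: r_sym | apply: r_irr].
Qed.

Lemma connect_ord_rel x y : connect r x y -> connect ord_rel (enum_rank x) (enum_rank y).
Proof.
case/connectP=> p r_p ->{y}; elim: p x r_p => [|z p IHp] x; first by rewrite connect0.
case/andP=> rxz /IHp; apply: connect_trans; apply: connect1; by rewrite ord_relE.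
Qed.

Lemma ord_rel_connected :
  (0 < #|T|)%N -> (forall x y, connect r x y) -> connected_graph ord_rel.
Proof.
move=> T_gt0 r_conn; split=> // i j.
by rewrite -(enum_valK i) -(enum_valK j); apply: connect_ord_rel.
Qed.

Lemma valency_ord_rel x : valency ord_rel (enum_rank x) = #|[set y | r x y]|.
Proof.
rewrite /valency -(card_imset _ enum_val_inj); apply: eq_card => y.
rewrite inE; apply/imsetP/idP => [[j] | rxy].
  by rewrite inE /ord_rel enum_rankK => rxj ->.
by exists (enum_rank y); rewrite ?inE ?ord_relE ?enum_rankK.
Qed.

(* Row eigenvectors of the adjacency matrix of [ord_rel], read back on [T]. *)
Definition eigenfun (a : algC) (f : T -> algC) :=
  (exists x, f x != 0) /\ forall y, \sum_x f x * (r x y)%:R = a * f y.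

Lemma eigenvalue_ord_relP a :
  eigenvalue (adjmx ord_rel) a <-> exists f, eigenfun a f.
Proof.
have sum_adjE (g : 'I_#|T| -> algC) y :
    \sum_i g i * adjmx ord_rel i (enum_rank y) =
    \sum_x g (enum_rank x) * (r x y)%:R.
  rewrite (big_enum_val (A := {: T})) /=.
  by apply: eq_bigr => i _; rewrite enum_valK mxE /ord_rel enum_rankK.
split.
- case/eigenvalueP => u u_eig u_neq0.
  exists (fun x => u 0 (enum_rank x)); split.
    have [i ui_neq0 | u_eq0] := pickP (fun i => u 0 i != 0).
      by exists (enum_val i); rewrite enum_valK.
    case/negP: u_neq0; apply/eqP/rowP => i; rewrite mxE.
    by apply/eqP/negbFE; rewrite u_eq0.
  move=> y; rewrite -sum_adjE.
  move/rowP: u_eig => /(_ (enum_rank y)); rewrite !mxE => <-.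
  by apply: eq_bigr => i _; rewrite !mxE.
- case=> f [[x fx_neq0] f_eig]; apply/eigenvalueP.
  exists (\row_i f (enum_val i)).
    apply/rowP => j; rewrite -[j]enum_valK !mxE.
    under eq_bigr do rewrite mxE.
    rewrite sum_adjE enum_rankK -f_eig.
    by apply: eq_bigr => y _; rewrite enum_rankK.
  apply/negP => /eqP/rowP/(_ (enum_rank x)); rewrite !mxE enum_rankK.
  by move/eqP; rewrite (negbTE fx_neq0).
Qed.

End OrdRel.

Lemma sumr_delta (R : pzSemiRingType) (T : finType) (q : T) (g : T -> R) :
  \sum_p (p == q)%:R * g p = g q.
Proof.
by rewrite (bigD1 q) //= eqxx mul1r big1 ?addr0 // => p /negbTE ->; rewrite mul0r.
Qed.

Lemma sumr_neq (R : pzRingType) (T : finType) (q : T) (x : T -> R) :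
  \sum_p x p * (p != q)%:R = \sum_p x p - x q.
Proof.
rewrite [in RHS](bigD1 q) //= addrC addrK (bigD1 q) //= eqxx mulr0 add0r.
by apply: eq_bigr => p ->; rewrite mulr1.
Qed.

Section BlockGraph.

Variables (P B : finType) (inc : B -> P -> bool) (lam : nat).

Definition block_graph : rel (P + B) := fun w1 w2 =>
  match w1, w2 with
  | inl p, inl q => p != q
  | inl p, inr b | inr b, inl p => inc b p
  | inr _, inr _ => false
  end.

Lemma block_graph_sym : symmetric block_graph.
Proof. by case=> [p | b] [q | c] //=; rewrite eq_sym. Qed.

Lemma block_graph_irr : irreflexive block_graph.
Proof. by case=> [p | b] /=; rewrite ?eqxx. Qed.

Lemma block_graph_connect :
  (forall b, exists p, inc b p) -> forall w1 w2, connect block_graph w1 w2.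
Proof.
move=> inc_total.
have to_point w : exists p, connect block_graph w (inl p).
  case: w => [p | b]; first by exists p; apply: connect0.
  by have [p bp] := inc_total b; exists p; apply: connect1.
have points_connect p q : connect block_graph (inl p) (inl q).
  by have [-> | neq_pq] := eqVneq p q; [apply: connect0 | apply: connect1].
move=> w1 w2; have [p1 w1p1] := to_point w1; have [p2 w2p2] := to_point w2.
apply: connect_trans w1p1 (connect_trans (points_connect p1 p2) _).
by rewrite (sym_connect_sym block_graph_sym).
Qed.

Lemma block_graph_valency b :
  #|[set w | block_graph (inr b) w]| = #|[set p | inc b p]|.
Proof.
rewrite -(card_imset [set p | inc b p] (@inl_inj P B)).
apply: eq_card => -[p | c]; rewrite inE /=.
  by rewrite (mem_imset _ _ inl_inj) inE.
by apply/esym/imsetP => -[].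
Qed.

Local Notation L := (lam%:R : algC).

Hypothesis common_blocks : forall p q : P,
  (\sum_b (inc b p && inc b q))%N = if p == q then (lam * lam)%N else lam.

Lemma incidence_gramE (x : P -> algC) q :
  \sum_b (inc b q)%:R * (\sum_p x p * (inc b p)%:R) =
  (L * L - L) * x q + L * \sum_p x p.
Proof.
under eq_bigr do rewrite mulr_sumr.
rewrite exchange_big /=.
rewrite (eq_bigr (fun p => x p * (if q == p then lam * lam else lam)%:R)) => [|p _].
  rewrite (bigD1 q) //= eqxx natrM.
  rewrite (eq_bigr (fun p => x p * L)) => [|p]; last by rewrite eq_sym => /negbTE ->.
  rewrite [in RHS](bigD1 q) //= -mulr_suml; ring.
rewrite -common_blocks natr_sum mulr_sumr; apply: eq_bigr => b _.
by case: (inc b q); case: (inc b p); rewrite /= ?mulr0 ?mul0r ?mulr1 ?mul1r.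
Qed.

Lemma eigenfun_block a f :
  eigenfun block_graph a f -> forall b,
  \sum_p f (inl p) * (inc b p)%:R = a * f (inr b).
Proof.
case=> _ f_eig b; rewrite -f_eig big_sumType /=.
by rewrite [X in _ = _ + X]big1 ?addr0 // => c _; rewrite mulr0.
Qed.

Lemma eigenfun_point a f :
  eigenfun block_graph a f -> forall q,
  (\sum_p f (inl p) - f (inl q)) + \sum_b f (inr b) * (inc b q)%:R = a * f (inl q).
Proof. by case=> _ f_eig q; rewrite -f_eig big_sumType /= sumr_neq. Qed.

Lemma eigenfun_points_relation a f : a != 0 -> eigenfun block_graph a f ->
  forall q, (a + L) * \sum_p f (inl p) = (a + L) * (a - L + 1) * f (inl q).
Proof.
move=> a_neq0 f_eig q; set s := \sum_p _.
have f_block b : f (inr b) = a^-1 * \sum_p f (inl p) * (inc b p)%:R.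
  by rewrite (eigenfun_block f_eig) mulKf.
have block_sum : \sum_b f (inr b) * (inc b q)%:R =
                 a^-1 * ((L * L - L) * f (inl q) + L * s).
  by rewrite -incidence_gramE mulr_sumr; apply: eq_bigr => b _; rewrite f_block; ring.
have := eigenfun_point f_eig q; rewrite -/s block_sum.
move/(congr1 (GRing.mul a)); rewrite mulrDr mulVKf // => eq_q.
rewrite (_ : (a + L) * s = a * (s - f (inl q)) + ((L * L - L) * f (inl q) + L * s)
                            + (a - L * L + L) * f (inl q)); last by ring.
by rewrite eq_q; ring.
Qed.

Definition block_graph_spectrum : seq algC :=
  [:: - L; 0; L - 1; #|P|%:R + L - 1].

Lemma block_graph_eigenvalue a f :
  eigenfun block_graph a f -> a \in block_graph_spectrum.
Proof.
move=> f_eig; rewrite /block_graph_spectrum.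
have [-> | a_neq0] := eqVneq a 0; first by rewrite !inE eqxx orbT.
have [-> | aL_neq0] := eqVneq a (- L); first by rewrite !inE eqxx.
have [-> | aL1_neq0] := eqVneq a (L - 1); first by rewrite !inE eqxx !orbT.
set s := \sum_p f (inl p).
have c_neq0 : a - L + 1 != 0.
  by rewrite (_ : a - L + 1 = a - (L - 1)) ?subr_eq0 //; ring.
have f_point q : f (inl q) = s / (a - L + 1).
  have aL : a + L != 0 by rewrite addr_eq0.
  have s_eq : s = (a - L + 1) * f (inl q).
    by apply: (mulfI aL); rewrite (eigenfun_points_relation a_neq0 f_eig q) mulrA.
  by rewrite s_eq mulrC mulKf.
have [s_eq0 | s_neq0] := eqVneq s 0.
  exfalso; case: (f_eig) => -[[p | b]] /negP fw_neq0 _; apply: fw_neq0.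
    by rewrite f_point s_eq0 mul0r.
  rewrite -(mulKf a_neq0 (f (inr b))) -(eigenfun_block f_eig).
  by rewrite big1 ?mulr0 // => p _; rewrite f_point s_eq0 !mul0r.
have c_eq : a - L + 1 = #|P|%:R.
  have s_sum : s = #|P|%:R * (s / (a - L + 1)).
    by rewrite {1}/s (eq_bigr _ (fun q _ => f_point q)) sumr_const mulr_natl.
  by apply: (mulfI s_neq0); rewrite {1}s_sum -mulrA mulfVK // mulrC.
have -> : a = #|P|%:R + L - 1 by rewrite -c_eq; ring.
by rewrite !inE eqxx !orbT.
Qed.

Lemma eigenfun_of_points a (x : P -> algC) : a != 0 -> (exists p, x p != 0) ->
  (forall q, (\sum_p x p - x q) + a^-1 * ((L * L - L) * x q + L * \sum_p x p)
             = a * x q) ->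
  exists f, eigenfun block_graph a f.
Proof.
move=> a_neq0 [p xp_neq0] x_eig.
exists (fun w => match w with
         | inl q => x q
         | inr b => a^-1 * \sum_q x q * (inc b q)%:R end).
split=> [|[q | b]]; first by exists (inl p).
  rewrite big_sumType /= sumr_neq -x_eig -incidence_gramE mulr_sumr.
  by congr (_ + _); apply: eq_bigr => b _; ring.
rewrite big_sumType /= [X in _ + X]big1 ?addr0 ?mulVKf // => c _.
by rewrite mulr0.
Qed.

Lemma block_graph_eigen0 b1 b2 :
  b1 != b2 -> inc b1 =1 inc b2 -> exists f, eigenfun block_graph 0 f.
Proof.
move=> neq_b12 inc_b12.
exists (fun w => (w == inr b1)%:R - (w == inr b2)%:R); split.
  by exists (inr b1); rewrite eqxx (inj_eq inr_inj) (negbTE neq_b12) subr0 oner_eq0.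
move=> w; rewrite mul0r; under eq_bigr do rewrite mulrBl.
by rewrite sumrB !sumr_delta; case: w => [q | c] /=; rewrite ?inc_b12 subrr.
Qed.

Lemma block_graph_eigen_nonprincipal (p0 p1 : P) b :
  p0 != p1 -> b != 0 -> b * (b + 1) = L * L - L ->
  exists f, eigenfun block_graph b f.
Proof.
move=> neq_p01 b_neq0 b_root.
pose x p := ((p == p0)%:R - (p == p1)%:R : algC).
have sum_delta (q : P) : \sum_p ((p == q)%:R : algC) = 1.
  by rewrite (bigD1 q) //= eqxx big1 ?addr0 // => p /negbTE ->.
have sum_x : \sum_p x p = 0 by rewrite sumrB !sum_delta subrr.
apply: (eigenfun_of_points (x := x)) => // [|q].
  by exists p0; rewrite /x eqxx (negbTE neq_p01) subr0 oner_eq0.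
by rewrite sum_x mulr0 addr0 add0r -b_root mulrA mulKf //; ring.
Qed.

Lemma block_graph_eigen_principal : (0 < #|P|)%N -> #|P|%:R + L - 1 != 0 ->
  exists f, eigenfun block_graph (#|P|%:R + L - 1) f.
Proof.
case/card_gt0P => p _ a_neq0.
apply: (eigenfun_of_points (x := fun=> 1)) => // [|q]; first by exists p; rewrite oner_eq0.
rewrite sumr_const (_ : (L * L - L) * 1 + L * (1 *+ #|P|) = (#|P|%:R + L - 1) * L).
  by rewrite mulKf //; ring.
by ring.
Qed.

Hypothesis lam_ge2 : (2 <= lam)%N.

Lemma block_graph_spectrum_sorted :
  (0 < #|P|)%N -> sorted <%R block_graph_spectrum.
Proof.
move=> P_gt0; have L1_gt0 : 0 < L - 1 by rewrite subr_gt0 ltr1n.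
rewrite /= oppr_lt0 ltr0n L1_gt0 ltrD2r ltrDr ltr0n P_gt0 !andbT.
exact: ltn_trans lam_ge2.
Qed.

Lemma block_graph_spectrumP (p0 p1 : P) (b1 b2 : B) :
  p0 != p1 -> b1 != b2 -> inc b1 =1 inc b2 ->
  forall a, (exists f, eigenfun block_graph a f) <-> a \in block_graph_spectrum.
Proof.
move=> neq_p01 neq_b12 inc_b12 a.
split=> [[f /block_graph_eigenvalue] // | ].
have L1_gt0 : 0 < L - 1 by rewrite subr_gt0 ltr1n.
rewrite /block_graph_spectrum !inE; case/or4P => /eqP ->.
- apply: (block_graph_eigen_nonprincipal neq_p01); last by ring.
  by rewrite oppr_eq0 pnatr_eq0 -lt0n (ltn_trans _ lam_ge2).
- exact: block_graph_eigen0 neq_b12 inc_b12.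
- by apply: (block_graph_eigen_nonprincipal neq_p01); [rewrite gt_eqF | ring].
- apply: block_graph_eigen_principal; first by apply/card_gt0P; exists p0.
  by rewrite gt_eqF // -addrA ltr_wpDl.
Qed.

End BlockGraph.

Lemma sum_nat_pred (T : finType) (A : pred T) :
  (\sum_x (A x : nat))%N = #|[set x | A x]|.
Proof. by rewrite -sum1dep_card [RHS]big_mkcond; apply: eq_bigr => x _; case: (A x). Qed.

Lemma card_supsets (T : finType) (A : {set T}) :
  #|[set X : {set T} | A \subset X]| = (2 ^ (#|T| - #|A|))%N.
Proof.
have -> : [set X : {set T} | A \subset X] = [set Y :|: A | Y in powerset (~: A)].
  apply/setP => X; rewrite inE; apply/idP/imsetP => [sAX | [Y _ ->]]; last first.
    exact: subsetUr.
  exists (X :\: A); first by rewrite powersetE setDE subsetIr.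
  apply/setP => x; rewrite !inE.
  by case: (boolP (x \in A)) => [/(subsetP sAX) ->|]; rewrite ?orbT ?orbF.
rewrite card_in_imset ?card_powerset; first by rewrite [#|~: A|]cardsCs setCK.
move=> Y1 Y2.
have disjA (Y : {set T}) : Y \subset ~: A -> [disjoint Y & A].
  by move=> sYA; rewrite -[A]setCK -subsets_disjoint.
rewrite !powersetE => /disjA/setDidPl dY1 /disjA/setDidPl dY2.
by move/(congr1 (fun X => X :\: A)); rewrite !setDUl setDv !setU0 dY1 dY2.
Qed.

Lemma num_valencies_ge n (e : rel 'I_n) m :
  (forall i, i < m -> exists x, valency e x = i.+1)%N -> (m <= num_valencies e)%N.
Proof.
move=> has_valency; rewrite /num_valencies -(size_iota 1 m).
apply: uniq_leq_size => [|d]; first exact: iota_uniq.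
rewrite mem_iota mem_undup => /andP[d_gt0 d_lt].
have [|x x_val] := has_valency d.-1; first by lia.
by rewrite -(prednK d_gt0) -x_val; apply: image_f.
Qed.

Section Design.

Variable k : nat.

Local Notation point := 'I_k.+2.

(* Every set of points is a block, the empty one being incident with all the
   points; in addition each point has 4^k private blocks.  Two distinct points
   then share 2^k + 1 blocks, and a point lies on (2^k + 1)^2 of them. *)
Definition design_block := ({set point} + (point * 'I_(4 ^ k)))%type.

Definition design_inc (b : design_block) (p : point) : bool :=
  match b with
  | inl X => (p \in X) || (X == set0)
  | inr c => c.1 == p
  end.

Local Notation lam := (2 ^ k + 1)%N.

Lemma design_common_blocks p q :
  (\sum_b (design_inc b p && design_inc b q))%N =
  if p == q then (lam * lam)%N else lam.
Proof.
rewrite big_sumType /=.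
have subset_blocks : (\sum_(X : {set point})
    (((p \in X) || (X == set0)) && ((q \in X) || (X == set0))))%N =
    (2 ^ (k.+2 - #|[set p; q]|) + 1)%N.
  rewrite (eq_bigr (fun X : {set point} => ([set p; q] \subset X) + (X == set0))%N) => [|X _].
    rewrite big_split /= !sum_nat_pred card_supsets card_ord.
    by rewrite (_ : [set X | X == set0] = [set set0]) ?cards1 //; apply/setP => X; rewrite !inE.
  have [-> | _] := eqVneq X set0; first by rewrite subUset !sub1set !inE.
  by rewrite !orbF subUset !sub1set addn0.
have private_blocks :
    (\sum_(c : point * 'I_(4 ^ k)) ((c.1 == p) && (c.1 == q)))%N = ((p == q) * 4 ^ k)%N.
  rewrite -(pair_bigA _ (fun i (_ : 'I_(4 ^ k)) => ((i == p) && (i == q) : nat))) /=.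
  rewrite (bigD1 p) //= [X in (_ + X)%N]big1 => [|i /negbTE neq_ip]; last first.
    by apply: big1 => j _; rewrite neq_ip.
  by rewrite addn0 eqxx sum_nat_const card_ord mulnC.
rewrite subset_blocks private_blocks cards2.
have [_ | _] := eqVneq p q; rewrite /= ?subn2 ?mul0n ?addn0 //.
by rewrite subn1 /= mul1n expnS (_ : 4 = 2 * 2)%N // expnMn; ring.
Qed.

Lemma design_inc_total b : exists p, design_inc b p.
Proof.
case: b => [X | [q j]]; last by exists q; rewrite /= eqxx.
have [-> | /set0Pn [p Xp]] := eqVneq X set0; first by exists ord0; rewrite /= eqxx orbT.
by exists p; rewrite /= Xp.
Qed.

Local Notation design_graph := (ord_rel (block_graph design_inc)).

Lemma design_num_valencies : (k.+2 <= num_valencies design_graph)%N.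
Proof.
apply: num_valencies_ge => i lt_i.
pose initial := [set widen_ord lt_i j | j : 'I_i.+1].
exists (enum_rank (inr (inl initial))).
rewrite valency_ord_rel block_graph_valency.
have widen_inj : injective (widen_ord lt_i) by move=> j j' [] /val_inj.
rewrite -[i.+1]card_ord -(card_imset _ widen_inj); apply: eq_card => p.
rewrite !inE /= orb_idr // => /eqP initial0.
have : widen_ord lt_i ord0 \in initial by apply: imset_f.
by rewrite initial0 inE.
Qed.

Lemma design_spectrum : num_distinct_eigenvalues design_graph 4.
Proof.
have lam_ge2 : (2 <= lam)%N by rewrite addn1 ltnS expn_gt0.
have points_gt0 : (0 < #|point|)%N by rewrite card_ord.
exists (block_graph_spectrum point lam); split.
- exact/lt_sorted_uniq/block_graph_spectrum_sorted.
- by [].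
move=> a; rewrite eigenvalue_ord_relP.
apply: (block_graph_spectrumP design_common_blocks lam_ge2 (p0 := ord0) (p1 := ord_max)
         (b1 := inl set0) (b2 := inl setT)) => [//||p].
- by apply/eqP => -[] /setP /(_ ord0); rewrite !inE.
- by rewrite /= !inE eqxx.
Qed.

End Design.

Local Close Scope ring_scope.

Theorem theorem9 (t : int) :
  exists (n : nat) (e : rel 'I_n),
    [/\ simple_graph e, connected_graph e, ~ bipartite e,
        num_distinct_eigenvalues e 4 &
        (t <= (num_valencies e)%:Z)%R].
Proof.
pose k := (absz t).+1.
exists #|{: 'I_k.+2 + design_block k}|, (ord_rel (block_graph (@design_inc k))); split.
- exact: ord_rel_simple (block_graph_sym _) (block_graph_irr _).
- apply: ord_rel_connected; first by rewrite card_sum card_ord.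
  exact/block_graph_connect/design_inc_total.
- pose p1 : 'I_k.+2 := @Ordinal k.+2 1 isT.
  apply: (@triangle_not_bipartite _ _ (enum_rank (inl ord0))
            (enum_rank (inl p1)) (enum_rank (inl ord_max)));
    by rewrite ord_relE.
- exact: design_spectrum.
- apply: le_trans (ler_norm t) _; rewrite -abszE lez_nat.
  by apply: leq_trans _ (design_num_valencies k); lia.
Qed.
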